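(* Let $\{q_k:k\ge0\}$ be a non-decreasing sequence of nonnegative numbers with $q_0>0$, and let $N\in\mathbb N$ and $n\ge M_N$. Then there is a constant $c>0$ (independent of $n,N$) such that for all $x\in G_m$ $$\left|\frac1{Q_n}\sum_{j=M_N}^{n}q_{n-j}D_j(x)\right|\le\frac{c}{M_N}\sum_{j=0}^{|n|}M_j\,|K_{M_j}(x)|.$$
   Context: Let $m=(m_0,m_1,\dots)$ be a bounded sequence of integers $m_k\ge 2$; $G_m=\prod_k Z_{m_k}$; $M_0=1$, $M_{k+1}=m_kM_k$, $n=\sum_j n_jM_j$ with $n_j\in Z_{m_j}$. $r_k(x)=\exp(2\pi i x_k/m_k)$, $\psi_n=\prod_k r_k^{n_k}$, $D_n=\sum_{k=0}^{n-1}\psi_k$, $K_n=\frac1n\sum_{k=1}^nD_k$. $Q_n=\sum_{k=0}^{n-1}q_k$. For $n\in\mathbb N_+$, $|n|$ denotes the unique integer with $M_{|n|}\le n<M_{|n|+1}$. *)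

(* complex values in an arbitrary numClosedFieldType C
   (e.g. algC). *)
From HB Require Import structures.
From mathcomp Require Import all_boot all_order all_algebra.
Set Implicit Arguments. Unset Strict Implicit. Unset Printing Implicit Defensive.
Import Order.TTheory GRing.Theory Num.Theory.
Local Open Scope ring_scope.

Definition Mseq (m : nat -> nat) (k : nat) : nat := (\prod_(i < k) m i)%N.

Definition digit (m : nat -> nat) (n j : nat) : nat := ((n %/ Mseq m j) %% m j)%N.

(* exp(2 pi i / p): the p-th root of -1 with minimal nonnegative argument
   is exp(i pi / p); its square is exp(2 pi i / p). *)
Definition omega (C : numClosedFieldType) (p : nat) : C := (p.-root (-1)) ^+ 2.

(* r_k(x) = exp(2 pi i x_k / m_k), x : G_m encoded as a digit sequence *)
Definition rad (C : numClosedFieldType) (m x : nat -> nat) (k : nat) : C :=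
  omega C (m k) ^+ x k.

(* psi_n = prod_k r_k^{n_k}; digits n_k vanish for k >= n since M_k >= 2^k > n *)
Definition psi (C : numClosedFieldType) (m x : nat -> nat) (n : nat) : C :=
  \prod_(k < n) rad C m x k ^+ digit m n k.

Definition Dir (C : numClosedFieldType) (m x : nat -> nat) (n : nat) : C :=
  \sum_(k < n) psi C m x k.

Definition Fej (C : numClosedFieldType) (m x : nat -> nat) (n : nat) : C :=
  n%:R^-1 * \sum_(1 <= k < n.+1) Dir C m x k.

Definition Qsum (C : numClosedFieldType) (q : nat -> C) (n : nat) : C :=
  \sum_(k < n) q k.

(* |n| : the (unique, for n >= 1) k with M_k <= n < M_(k+1), i.e. the largest
   k with M_k <= n (such k are < n.+1 since M_k >= 2^k) *)
Definition vabs (m : nat -> nat) (n : nat) : nat :=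
  (\max_(k < n.+1 | Mseq m k <= n) k)%N.

(* Write Dsum n := n K_n = D_1 + ... + D_n.  Since psi is multiplicative across
   the mixed-radix digits, Dsum (t M_s + i) = Dsum (t M_s) + i D_(t M_s)
   + psi_(t M_s) Dsum i for i <= M_s; and D_(M_s) either vanishes or equals M_s
   with psi trivial below M_s, whence M_s |D_(M_s)| <= 2 |Dsum (M_s)|.  Peeling
   off the top digit of j <= n then gives |Dsum j| <= c sum_(l <= |n|) |Dsum M_l|
   with c depending only on sup m.  Abel summation expresses
   sum_(j >= M_N) q_(n-j) D_j through the Dsum j with total weight at most
   2 q_(n - M_N), and monotonicity of q gives Q_n >= M_N q_(n - M_N). *)

From Pilot Require Import Defs.
From HB Require Import structures.
From mathcomp Require Import all_boot all_order all_algebra.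
From mathcomp Require Import zify ring.
Import Order.TTheory Order.NatMonotonyTheory GRing.Theory Num.Theory.
Local Open Scope ring_scope.

Section SummationByParts.
Variable R : numDomainType.

Lemma sum_by_parts (q u : nat -> R) d :
  \sum_(k < d.+1) q k * (u k - u k.+1) =
  q 0%N * u 0%N - q d * u d.+1 + \sum_(k < d) (q k.+1 - q k) * u k.+1.
Proof.
elim: d => [|d IH]; first by rewrite big_ord1 big_ord0; ring.
by rewrite big_ord_recr /= IH big_ord_recr /=; ring.
Qed.

Lemma abel_norm_le (q u : nat -> R) (X : R) d :
  0 <= q 0%N -> (forall k, q k <= q k.+1) ->
  (forall k, (k <= d.+1)%N -> `|u k| <= X) ->
  `|\sum_(k < d.+1) q k * (u k - u k.+1)| <= 2%:R * q d * X.
Proof.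
move=> q0_ge0 q_incr u_le.
have q_ge0 k : 0 <= q k.
  exact: le_trans q0_ge0 (nondecnP q_incr _ _ (leq0n k)).
have dq_ge0 k : 0 <= q k.+1 - q k by rewrite subr_ge0.
have tail : `|\sum_(k < d) (q k.+1 - q k) * u k.+1| <= (q d - q 0%N) * X.
  rewrite -(telescope_sumr _ (leq0n d)) big_mkord mulr_suml.
  apply: le_trans (ler_norm_sum _ _ _) _; apply: ler_sum => k _.
  by rewrite normrM ger0_norm // ler_wpM2l // u_le // ltnW // ltnS.
rewrite sum_by_parts.
apply: le_trans (ler_normD _ _) _; apply: le_trans (lerD (ler_normB _ _) tail) _.
rewrite !normrM (ger0_norm q0_ge0) (ger0_norm (q_ge0 d)).
have -> : 2%:R * q d * X = q 0%N * X + q d * X + (q d - q 0%N) * X by ring.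
by rewrite !lerD // ler_wpM2l // u_le.
Qed.

Lemma sum_ge_tail (q : nat -> R) n a : (a <= n)%N ->
  (forall k, 0 <= q k) -> (forall k, q k <= q k.+1) ->
  a%:R * q (n - a)%N <= \sum_(k < n) q k.
Proof.
move=> le_an q_ge0 q_incr.
rewrite -(big_mkord xpredT) (@big_cat_nat _ _ _ (n - a)) ?leq_subr //=.
rewrite -[X in X <= _]add0r; apply: lerD; first exact: sumr_ge0.
have -> : a%:R * q (n - a)%N = \sum_(n - a <= k < n) q (n - a)%N.
  by rewrite sumr_const_nat mulr_natl subKn.
apply: ler_sum_nat => k /andP[le_k _].
exact: nondecnP q_incr _ _ le_k.
Qed.

End SummationByParts.

Lemma big_nat_rev_sub (V : nmodType) (F : nat -> V) a n : (a <= n)%N ->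
  \sum_(a <= j < n.+1) F j = \sum_(k < (n - a).+1) F (n - k)%N.
Proof.
move=> le_an; rewrite big_nat_rev -{1}[a]add0n big_addn big_mkord.
have -> : (n.+1 - a = (n - a).+1)%N by lia.
by apply: eq_bigr => k _; congr F; lia.
Qed.

Section MixedRadix.
Variable m : nat -> nat.
Hypothesis m_ge2 : forall k, (2 <= m k)%N.
Local Notation M := (Mseq m).

Lemma MseqS k : M k.+1 = (M k * m k)%N.
Proof. by rewrite /Mseq big_ord_recr. Qed.

Lemma Mseq_cat s k : (s <= k)%N -> M k = (M s * \prod_(s <= i < k) m i)%N.
Proof. by move=> le_sk; rewrite /Mseq -!(big_mkord xpredT) -big_cat_nat. Qed.

Lemma Mseq_gt0 k : (0 < M k)%N.
Proof. by apply: prodn_gt0 => i; apply: leq_trans (m_ge2 i). Qed.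

Lemma ltn_Mseq k : (k < M k)%N.
Proof.
elim: k => [|k IH]; first by rewrite /Mseq big_ord0.
by rewrite MseqS; have := m_ge2 k; nia.
Qed.

Lemma leq_Mseq s k : (s <= k)%N -> (M s <= M k)%N.
Proof.
move=> /Mseq_cat ->; rewrite leq_pmulr //.
by apply: prodn_gt0 => i; apply: leq_trans (m_ge2 i).
Qed.

Lemma digit_small n k : (n < M k)%N -> digit m n k = 0%N.
Proof. by move=> lt_nM; rewrite /digit divn_small ?mod0n. Qed.

Lemma digit_mulMD_lt t s i k : (k < s)%N -> digit m (t * M s + i) k = digit m i k.
Proof.
move=> lt_ks; have [P ->] : exists P, M s = (P * M k.+1)%N.
  by apply/dvdnP; rewrite (Mseq_cat _ _ lt_ks) dvdn_mulr.
rewrite /digit MseqS !mulnA -mulnAC divnMDl ?Mseq_gt0 //.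
by rewrite -modnDm modnMl add0n modn_mod.
Qed.

Lemma digit_mulM_lt t s k : (k < s)%N -> digit m (t * M s) k = 0%N.
Proof. by move=> lt_ks; rewrite -[(t * M s)%N]addn0 digit_mulMD_lt // /digit div0n mod0n. Qed.

Lemma digit_mulMD t s i k : (i < M s)%N ->
  digit m (t * M s + i) k = (digit m (t * M s) k + digit m i k)%N.
Proof.
move=> lt_iM; case: (ltnP k s) => [lt_ks | le_sk].
  by rewrite digit_mulMD_lt // digit_mulM_lt.
rewrite (digit_small _ _ (leq_trans lt_iM (leq_Mseq _ _ le_sk))) addn0.
rewrite /digit (Mseq_cat _ _ le_sk) !divnMA divnMDl ?Mseq_gt0 //.
by rewrite (divn_small lt_iM) addn0 mulnK ?Mseq_gt0.
Qed.

Lemma vabs_ltn n : (n < M (vabs m n).+1)%N.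
Proof.
rewrite ltnNge; apply/negP => le_Mn.
have lt_vn : ((vabs m n).+1 < n.+1)%N.
  by rewrite ltnS (leq_trans (ltnW (ltn_Mseq _)) le_Mn).
have := @leq_bigmax_cond _ (fun k : 'I_n.+1 => (M k <= n)%N) val (Ordinal lt_vn) le_Mn.
by rewrite ltnn.
Qed.

End MixedRadix.

Lemma omega_expn (C : numClosedFieldType) p : (0 < p)%N -> omega C p ^+ p = 1.
Proof. by move=> p_gt0; rewrite /omega exprAC rootCK // sqrrN expr1n. Qed.

Lemma norm_omega (C : numClosedFieldType) p : (0 < p)%N -> `|omega C p| = 1.
Proof. by move=> p_gt0; rewrite /omega normrX norm_rootC normrN1 rootC1 // expr1n. Qed.

Section Characters.
Variables (C : numClosedFieldType) (m x : nat -> nat).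
Hypothesis m_ge2 : forall k, (2 <= m k)%N.
Local Notation M := (Mseq m).
Local Notation r := (Defs.rad C m x).
Local Notation ps := (psi C m x).

Let m_gt0 k : (0 < m k)%N. Proof. exact: leq_trans (m_ge2 k). Qed.

Lemma rad_expm k : r k ^+ m k = 1.
Proof. by rewrite /Defs.rad exprAC omega_expn // expr1n. Qed.

Lemma norm_rad k : `|r k| = 1.
Proof. by rewrite /Defs.rad normrX norm_omega // expr1n. Qed.

Lemma norm_psi n : `|ps n| = 1.
Proof.
apply: (big_ind (fun z : C => `|z| = 1)); first exact: normr1.
  by move=> a b na nb; rewrite normrM na nb mulr1.
by move=> k _; rewrite normrX norm_rad expr1n.
Qed.

Lemma psi_prod K n : (n < M K)%N -> ps n = \prod_(k < K) r k ^+ digit m n k.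
Proof.
move=> lt_nMK; set F := fun k => r k ^+ digit m n k.
have lt_nM0 : (n < M (minn n K))%N by rewrite /minn; case: ifP; rewrite ?ltn_Mseq.
have shrink K1 : (minn n K <= K1)%N -> \prod_(k < K1) F k = \prod_(k < minn n K) F k.
  move=> le_K1; rewrite [RHS](big_ord_widen _ _ le_K1) [RHS]big_mkcond.
  apply: eq_bigr => k _; case: ltnP => // le_k.
  by rewrite /F digit_small ?expr0 // (leq_trans lt_nM0) ?leq_Mseq.
by rewrite (shrink K (geq_minr _ _)) -(shrink n (geq_minl _ _)).
Qed.

Lemma psi_mulMD t s i : (i < M s)%N -> ps (t * M s + i) = ps (t * M s) * ps i.
Proof.
move=> lt_iM; set K := (t * M s + i)%N.
have lt_KM : (K < M K)%N by apply: ltn_Mseq.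
rewrite !(psi_prod K) //; try by apply: leq_ltn_trans lt_KM; rewrite (leq_addl, leq_addr).
by rewrite -big_split; apply: eq_bigr => k _; rewrite digit_mulMD // exprD.
Qed.

Lemma psi_mulM u s : (u < m s)%N -> ps (u * M s) = r s ^+ u.
Proof.
move=> lt_um; rewrite (psi_prod s.+1); last by rewrite MseqS mulnC ltn_pmul2l ?Mseq_gt0.
rewrite big_ord_recr /= big1 => [|k _]; last by rewrite digit_mulM_lt ?expr0.
by rewrite mul1r /digit mulnK ?Mseq_gt0 // modn_small.
Qed.

End Characters.

Lemma leq_sqr_twice_triangular n : (n * n <= 2 * \sum_(1 <= k < n.+1) k)%N.
Proof. by elim: n => // n IH; rewrite big_nat_recr //=; nia. Qed.

Section Dirichlet.
Variables (C : numClosedFieldType) (m x : nat -> nat).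
Hypothesis m_ge2 : forall k, (2 <= m k)%N.
Local Notation M := (Mseq m).
Local Notation r := (Defs.rad C m x).
Local Notation ps := (psi C m x).
Local Notation D := (Dir C m x).

Definition Dsum n := \sum_(1 <= k < n.+1) D k.

Lemma Dir0 : D 0 = 0.
Proof. by rewrite /Dir big_ord0. Qed.

Lemma Dir_Dsum n : D n = Dsum n - Dsum n.-1.
Proof.
case: n => [|n]; first by rewrite Dir0 subrr.
by rewrite /Dsum big_nat_recr //= addrC addrK.
Qed.

Lemma Dsum_Fej n : (0 < n)%N -> Dsum n = n%:R * Fej C m x n.
Proof. by move=> n_gt0; rewrite /Fej mulrA mulfV ?mul1r // pnatr_eq0 -lt0n. Qed.

Lemma Dir_mulMD t s i : (i <= M s)%N ->
  D (t * M s + i) = D (t * M s) + ps (t * M s) * D i.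
Proof.
move=> le_iM; rewrite /Dir big_split_ord /= mulr_sumr; congr (_ + _).
by apply: eq_bigr => k _; rewrite psi_mulMD // (leq_trans (ltn_ord k)).
Qed.

Lemma Dir_mulM t s : D (t * M s) = D (M s) * \sum_(u < t) ps (u * M s).
Proof.
elim: t => [|t IH]; first by rewrite mul0n Dir0 big_ord0 mulr0.
by rewrite mulSnr Dir_mulMD // IH big_ord_recr /= mulrDr [ps _ * _]mulrC.
Qed.

(* Either r_s is a nontrivial m_s-th root of unity, so that D_(M_(s+1)) is
   D_(M_s) times a vanishing geometric sum, or psi is trivial up to M_(s+1). *)
Lemma Dir_Mseq_cases s : D (M s) = 0 \/ forall k, (k < M s)%N -> ps k = 1.
Proof.
elim: s => [|s [D0 | ps1]].
- by right=> k; rewrite /Mseq big_ord0 ltnS leqn0 => /eqP ->; rewrite /psi big_ord0.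
- by left; rewrite MseqS mulnC Dir_mulM D0 mul0r.
have [r1 | r_neq1] := eqVneq (r s) 1; last first.
  left; rewrite MseqS mulnC Dir_mulM.
  have geom : (r s - 1) * \sum_(u < m s) r s ^+ u = 0.
    by rewrite -subrX1 rad_expm // subrr.
  rewrite (eq_bigr (fun u : 'I_(m s) => r s ^+ u)) => [|u _]; last by rewrite psi_mulM.
  move/eqP: geom; rewrite mulf_eq0 subr_eq0 (negbTE r_neq1) /=.
  by move=> /eqP ->; rewrite mulr0.
right=> k lt_kM; rewrite (divn_eq k (M s)) psi_mulMD ?ltn_mod ?Mseq_gt0 //.
have lt_q : (k %/ M s < m s)%N by rewrite ltn_divLR ?Mseq_gt0 // mulnC -MseqS.
by rewrite psi_mulM // r1 expr1n mul1r ps1 // ltn_mod Mseq_gt0.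
Qed.

Lemma Dsum_mulMD t s i : (i <= M s)%N ->
  Dsum (t * M s + i) = Dsum (t * M s) + i%:R * D (t * M s) + ps (t * M s) * Dsum i.
Proof.
move=> le_iM; set a := (t * M s)%N.
rewrite /Dsum (@big_cat_nat _ _ _ a.+1) //= ?ltnS ?leq_addr // -addrA; congr (_ + _).
rewrite -[a.+1]add1n big_addn.
have -> : ((a + i).+1 - a = i.+1)%N by lia.
rewrite (@eq_big_nat _ _ _ _ _ _ (fun k => D a + ps a * D k)) => [|k /andP[_ le_ki]].
  by rewrite big_split /= sumr_const_nat subn1 -mulr_sumr mulr_natl.
by rewrite addnC Dir_mulMD // (leq_trans _ le_iM).
Qed.

Lemma Mseq_Dir_le s : (M s)%:R * `|D (M s)| <= 2%:R * `|Dsum (M s)|.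
Proof.
case: (Dir_Mseq_cases s) => [->|ps1]; first by rewrite normr0 mulr0 mulr_ge0 ?ler0n.
have Dj j : (j <= M s)%N -> D j = j%:R.
  move=> le_j; rewrite /Dir (eq_bigr (fun _ => 1)) ?sumr_const ?card_ord // => k _.
  by rewrite ps1 // (leq_trans (ltn_ord k)).
rewrite Dj // /Dsum (@eq_big_nat _ _ _ _ _ _ (fun k => k%:R)) => [|k /andP[_]].
  by rewrite -natr_sum !normr_nat -!natrM ler_nat leq_sqr_twice_triangular.
exact: Dj.
Qed.

Lemma norm_Dir_mulM_le t s : (M s)%:R * `|D (t * M s)| <= 2%:R * t%:R * `|Dsum (M s)|.
Proof.
have sum_le : `|\sum_(u < t) ps (u * M s)| <= t%:R.
  apply: le_trans (ler_norm_sum _ _ _) _.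
  by rewrite (eq_bigr (fun _ => 1)) ?sumr_const ?card_ord // => u _; rewrite norm_psi.
rewrite Dir_mulM normrM mulrA [X in _ <= X]mulrAC.
by apply: ler_pM; rewrite ?mulr_ge0 ?ler0n ?Mseq_Dir_le.
Qed.

Lemma norm_Dsum_mulMD_le t s i : (i <= M s)%N ->
  `|Dsum (t * M s + i)| <= `|Dsum (t * M s)| + 2%:R * t%:R * `|Dsum (M s)| + `|Dsum i|.
Proof.
move=> le_iM; rewrite Dsum_mulMD //.
apply: le_trans (ler_normD _ _) _; rewrite normrM norm_psi // mul1r lerD2r.
apply: le_trans (ler_normD _ _) _; rewrite lerD2l normrM normr_nat.
by apply: le_trans (norm_Dir_mulM_le t s); rewrite ler_wpM2r // ler_nat.
Qed.

Lemma norm_Dsum_mulM_le t s : `|Dsum (t * M s)| <= (3 * t ^ 2)%:R * `|Dsum (M s)|.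
Proof.
elim: t => [|t IH]; first by rewrite mul0n /Dsum big_geq // normr0 mulr_ge0.
rewrite mulSnr; apply: le_trans (norm_Dsum_mulMD_le _ _ _ (leqnn _)) _.
apply: le_trans (lerD (lerD IH (lexx _)) (lexx _)) _.
rewrite -[X in _ + X <= _]mul1r -natrM -!mulrDl -natrD natr1 ler_wpM2r // ler_nat.
nia.
Qed.

Lemma norm_Dsum_le B : (forall k, (m k <= B)%N) -> forall s n, (n < M s)%N ->
  `|Dsum n| <= (3 * B ^ 2)%:R * \sum_(l < s) `|Dsum (M l)|.
Proof.
move=> m_leB; elim=> [|s IH] n lt_nM.
  move: lt_nM; rewrite /Mseq big_ord0 ltnS leqn0 => /eqP ->.
  by rewrite /Dsum big_geq // normr0 mulr_ge0 ?sumr_ge0.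
rewrite (divn_eq n (M s)); set t := (n %/ M s)%N; set i := (n %% M s)%N.
have lt_iM : (i < M s)%N by rewrite ltn_mod Mseq_gt0.
have lt_tm : (t < m s)%N by rewrite ltn_divLR ?Mseq_gt0 // mulnC -MseqS.
apply: le_trans (norm_Dsum_mulMD_le _ _ _ (ltnW lt_iM)) _.
rewrite big_ord_recr /= mulrDr [in X in _ <= X]addrC lerD ?IH //.
apply: le_trans (lerD (norm_Dsum_mulM_le t s) (lexx _)) _.
rewrite -natrM -mulrDl -natrD ler_wpM2r // ler_nat.
by have := m_leB s; nia.
Qed.

End Dirichlet.

Theorem mainTheorem5 (C : numClosedFieldType) (m : nat -> nat)
  (hm2 : forall k, (2 <= m k)%N)
  (hmb : exists B : nat, forall k, (m k <= B)%N)
  (q : nat -> C)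
  (hq0 : 0 < q 0%N)
  (hqnn : forall k, 0 <= q k)
  (hqmono : forall k, q k <= q k.+1) :
  exists c : C, 0 < c /\
    forall (N n : nat) (x : nat -> nat),
      (Mseq m N <= n)%N ->
      (forall k, (x k < m k)%N) ->
      `| (Qsum q n)^-1 * \sum_(Mseq m N <= j < n.+1) q (n - j)%N * Dir C m x j |
        <= c / (Mseq m N)%:R *
           \sum_(j < (vabs m n).+1) (Mseq m j)%:R * `| Fej C m x (Mseq m j) |.
Proof.
have [B m_leB] := hmb; set c0 : C := (3 * B ^ 2)%:R.
have c0_gt0 : 0 < c0.
  by rewrite ltr0n muln_gt0 expn_gt0 (leq_trans _ (m_leB 0%N)) ?(ltnW (hm2 0%N)).
(* The bound holds for any x, whether or not its digits satisfy x_k < m_k. *)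
exists (2%:R * c0); split=> [|N n x le_Mn _]; first by rewrite mulr_gt0 // ltr0n.
set a := Mseq m N; set S := \sum_(j < (vabs m n).+1) `|Dsum C m x (Mseq m j)|.
have -> : \sum_(j < (vabs m n).+1) (Mseq m j)%:R * `|Fej C m x (Mseq m j)| = S.
  by apply: eq_bigr => j _; rewrite Dsum_Fej ?normrM ?normr_nat // Mseq_gt0.
have Dsum_le j : (j <= n)%N -> `|Dsum C m x j| <= c0 * S.
  move=> le_jn; have lt_jM := leq_ltn_trans le_jn (vabs_ltn _ hm2 n).
  exact: (@norm_Dsum_le _ _ _ hm2 _ m_leB _ _ lt_jM).
have sum_le :
    `|\sum_(a <= j < n.+1) q (n - j)%N * Dir C m x j| <= 2%:R * q (n - a)%N * (c0 * S).
  rewrite big_nat_rev_sub // (eq_bigr (fun k : 'I_(n - a).+1 =>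
    q k * (Dsum C m x (n - k) - Dsum C m x (n - k.+1)))) => [|k _].
    apply: (@abel_norm_le _ q (fun k => Dsum C m x (n - k)) _ _ (hqnn 0%N) hqmono).
    by move=> k _; apply: Dsum_le; rewrite leq_subr.
  have le_kn : (k <= n)%N by rewrite (leq_trans _ (leq_subr a n)) // -ltnS.
  by rewrite subKn // Dir_Dsum subnS.
have Q_ge : a%:R * q (n - a)%N <= Qsum q n by apply: sum_ge_tail.
have a_gt0 : 0 < a%:R :> C by rewrite ltr0n Mseq_gt0.
have qa_gt0 : 0 < q (n - a)%N.
  exact: lt_le_trans hq0 (nondecnP hqmono _ _ (leq0n _)).
have Q_gt0 : 0 < Qsum q n by apply: lt_le_trans Q_ge; rewrite mulr_gt0.
rewrite normrM normfV (gtr0_norm Q_gt0) ler_pdivrMl //; apply: le_trans sum_le _.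
have -> : 2%:R * q (n - a)%N * (c0 * S) = a%:R * q (n - a)%N * (2%:R * c0 / a%:R * S).
  by field; rewrite gt_eqF.
by rewrite ler_wpM2r // !mulr_ge0 ?invr_ge0 ?sumr_ge0 ?ltW.
Qed.
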